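(* In the space $\widetilde{l_1}$, the sequence $\{2^{-i}e_{2^i}\}_{i=0}^\infty$ is equivalent to the canonical basis of $l_1$; that is, there are constants $0<c\le C$ such that $c\sum_{i=0}^n|c_i|\le\big\|\sum_{i=0}^nc_i2^{-i}e_{2^i}\big\|_{\widetilde{l_1}}\le C\sum_{i=0}^n|c_i|$ for all $n$ and all scalars $c_0,\dots,c_n$.
   Context: $e_m$ denotes the $m$-th unit vector sequence. For a real sequence $a=(a_n)_{n\ge1}$ let $\widetilde{a_n}=\sup_{k\ge n}|a_k|$; $\widetilde{l_1}$ is the space of sequences with $\|a\|_{\widetilde{l_1}}=\sum_{n\ge1}\widetilde{a_n}<\infty$. *)

From HB Require Import structures.
From mathcomp Require Import all_boot all_order all_algebra.
From mathcomp Require Import all_classical all_reals all_analysis.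
Set Implicit Arguments. Unset Strict Implicit. Unset Printing Implicit Defensive.
Import Order.TTheory GRing.Theory Num.Theory.
Local Open Scope ring_scope.
Local Open Scope classical_set_scope.

(* Real sequences a = (a_n)_{n>=1}, represented as nat -> R; the value at 0 is ignored. *)

Definition unitvec (R : realType) (m : nat) : nat -> R :=
  fun k => if k == m then 1 else 0.

Definition tilde_seq (R : realType) (a : nat -> R) (n : nat) : \bar R :=
  ereal_sup [set (`|a k|)%:E | k in [set k | (n <= k)%N]].

Definition tl1_norm (R : realType) (a : nat -> R) : \bar R :=
  (\sum_(1 <= n <oo) tilde_seq a n)%E.

From HB Require Import structures.
From mathcomp Require Import all_boot all_order all_algebra.
From mathcomp Require Import all_classical all_reals all_analysis.
From mathcomp Require Import lra.
Set Implicit Arguments. Unset Strict Implicit. Unset Printing Implicit Defensive.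
Import Order.TTheory GRing.Theory Num.Theory.
Local Open Scope ring_scope.

(* Write [x] for the combination and [a_i = |c_i| 2^-i], so that [|x (2^i)| = a_i].
   Above: [tilde x m] is at most the sum of the [a_i] with [m <= 2^i], and summing over
   [m] counts each [a_i] exactly [2^i] times.  Below: on the block [2^j < m <= 2^(j+1)]
   of length [2^j], [tilde x m >= a_(j+1)], giving [|c_(j+1)|/2]; the first term
   [tilde x 1 >= |c_0|] completes the bound with constant [1/2]. *)

Lemma tilde_seq_ge0 (R : realType) (a : nat -> R) m : (0 <= tilde_seq a m)%E.
Proof.
apply: (@le_trans _ _ (`|a m|)%:E); first by rewrite lee_fin.
by apply: ereal_sup_ubound; exists m => //=.
Qed.

Lemma le_tilde_seq (R : realType) (a : nat -> R) m k :
  (m <= k)%N -> ((`|a k|)%:E <= tilde_seq a m)%E.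
Proof. by move=> mk; apply: ereal_sup_ubound; exists k. Qed.

Lemma tilde_seq_le (R : realType) (a : nat -> R) m (b : R) :
  (forall k, (m <= k)%N -> `|a k| <= b) -> (tilde_seq a m <= b%:E)%E.
Proof. by move=> ab; apply/ereal_supP => _ [k /= mk <-]; rewrite lee_fin ab. Qed.

Lemma sum_tilde_seq_ge (R : realType) (a : nat -> R) lo hi k :
  (hi <= k.+1)%N ->
  (((hi - lo)%:R * `|a k|)%:E <= \sum_(lo <= m < hi) tilde_seq a m)%E.
Proof.
move=> hik; rewrite mulr_natl -sumr_const_nat -sumEFin.
rewrite big_nat_cond [leRHS]big_nat_cond; apply: lee_sum => m /andP[/andP[_ mhi] _].
by apply: le_tilde_seq; rewrite -ltnS (leq_trans mhi).
Qed.

Lemma sum_nat_le_indicator (R : realType) N K : (K <= N)%N ->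
  \sum_(1 <= m < N.+1) ((m <= K)%N%:R : R) = K%:R.
Proof.
move=> KN; rewrite (big_cat_nat (n := K.+1)) //=.
rewrite [X in _ + X]big_nat_cond [X in _ + X]big1 ?addr0; last first.
  by move=> m /andP[/andP[Km _] _]; rewrite leqNgt Km.
rewrite big_nat_cond (eq_bigr (fun _ => 1)); last first.
  by move=> m /andP[/andP[_ mK] _]; rewrite -ltnS mK.
by rewrite -big_nat_cond sumr_const_nat subn1.
Qed.

Section DyadicCombination.
Variables (R : realType) (n : nat) (cs : nat -> R).

Definition dyadic_comb (k : nat) : R :=
  \sum_(i < n.+1) cs i * (2 ^- i) * unitvec R (2 ^ i)%N k.

Let x := dyadic_comb.

Lemma norm_pow2_inv i : `|(2 : R) ^- i| = 2 ^- i.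
Proof. by rewrite ger0_norm // invr_ge0 exprn_ge0. Qed.

Lemma dyadic_comb_pow2 i : (i < n.+1)%N -> `|x (2 ^ i)%N| = `|cs i| * 2 ^- i.
Proof.
move=> lt_in; rewrite /x /dyadic_comb (bigD1 (Ordinal lt_in)) //=.
rewrite /unitvec eqxx mulr1 big1 ?addr0 ?normrM ?norm_pow2_inv //.
move=> j /= neq_ji; rewrite eqn_exp2l // (_ : (i == j) = false) ?mulr0 //.
by apply/negbTE; apply: contra neq_ji => /eqP eij; apply/eqP/val_inj.
Qed.

Lemma tilde_dyadic_comb_le m :
  (tilde_seq x m <= (\sum_(i < n.+1) `|cs i| * 2 ^- i * (m <= 2 ^ i)%N%:R)%:E)%E.
Proof.
apply: tilde_seq_le => k mk; apply: (le_trans (ler_norm_sum _ _ _)).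
apply: ler_sum => i _; rewrite !normrM norm_pow2_inv ler_wpM2l //.
rewrite /unitvec; case: (eqVneq k (2 ^ i)%N) => [ki|_].
  by rewrite -ki mk normr1.
by rewrite normr0 ler0n.
Qed.

Lemma tl1_norm_dyadic_comb_le : (tl1_norm x <= (\sum_(i < n.+1) `|cs i|)%:E)%E.
Proof.
pose f m := \sum_(i < n.+1) `|cs i| * 2 ^- i * (m <= 2 ^ i)%N%:R.
have f_ge0 m : 0 <= f m.
  by apply: sumr_ge0 => i _; rewrite !mulr_ge0 // invr_ge0 exprn_ge0.
apply: (le_trans (lee_nneseries (v := fun m => (f m)%:E) _ _)).
- by move=> m _ _; apply: tilde_seq_ge0.
- by move=> m _; apply: tilde_dyadic_comb_le.
rewrite (@nneseries_split _ _ 1 (2 ^ n)%N); last by move=> k _; rewrite lee_fin.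
rewrite eseries0 ?adde0; last first.
  move=> m nm _; rewrite /f big1 // => i _.
  rewrite leqNgt (leq_trans _ nm) ?mulr0 // add1n ltnS leq_pexp2l //.
  exact: ltn_ord i.
rewrite sumEFin lee_fin add1n /f exchange_big /= ler_sum // => i _.
rewrite -mulr_sumr sum_nat_le_indicator; last by rewrite leq_pexp2l // -ltnS.
by rewrite natrX -mulrA mulVf ?mulr1 // expf_neq0.
Qed.

Lemma dyadic_block_ge j : (j < n)%N ->
  ((`|cs j.+1| / 2)%:E <= \sum_((2 ^ j).+1 <= m < (2 ^ j.+1).+1) tilde_seq x m)%E.
Proof.
move=> jn; apply: le_trans (sum_tilde_seq_ge x (2 ^ j).+1 (leqnn (2 ^ j.+1).+1)).
rewrite dyadic_comb_pow2 // subSS expnS mul2n -addnn addnK natrX exprS invfM.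
have pow2_neq0 : (2 : R) ^+ j != 0 by rewrite expf_neq0.
by rewrite lee_fin mulrCA [2 ^+ j * _]mulrCA mulfV // mulr1.
Qed.

Lemma dyadic_partial_sum_ge j : (j <= n)%N ->
  (((\sum_(i < j.+1) `|cs i|) / 2)%:E <= \sum_(1 <= m < (2 ^ j).+1) tilde_seq x m)%E.
Proof.
elim: j => [_|j IH jn].
  rewrite expn0 big_nat1 big_ord1; apply: le_trans (le_tilde_seq x (leqnn 1)).
  have := dyadic_comb_pow2 (ltn0Sn n); rewrite expn0 expr0 invr1 mulr1 => ->.
  by rewrite lee_fin ler_pdivrMr // ler_peMr //; lra.
have le_blocks : ((2 ^ j).+1 <= (2 ^ j.+1).+1)%N by rewrite ltnS leq_pexp2l.
rewrite (big_cat_nat _ le_blocks) //= big_ord_recr /= mulrDl EFinD.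
by apply: leeD; [apply: IH; exact: ltnW | exact: dyadic_block_ge].
Qed.

Lemma tl1_norm_dyadic_comb_ge :
  (((\sum_(i < n.+1) `|cs i|) / 2)%:E <= tl1_norm x)%E.
Proof.
apply: le_trans (dyadic_partial_sum_ge (leqnn n)) _.
by apply: nneseries_lim_ge => m _ _; apply: tilde_seq_ge0.
Qed.

End DyadicCombination.

Theorem theorem2 (R : realType) :
  exists c C : R, 0 < c /\ c <= C /\
  forall (n : nat) (cs : nat -> R),
    let x : nat -> R :=
      fun k => \sum_(i < n.+1) cs i * (2 ^- i) * unitvec R (2 ^ i)%N k in
    ((c * \sum_(i < n.+1) `|cs i|)%:E <= tl1_norm x)%E /\
    (tl1_norm x <= (C * \sum_(i < n.+1) `|cs i|)%:E)%E.
Proof.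
exists (1 / 2), 1; do 2 (split; first lra).
move=> n cs x; split.
- by rewrite mul1r mulrC; apply: tl1_norm_dyadic_comb_ge.
- by rewrite mul1r; apply: tl1_norm_dyadic_comb_le.
Qed.
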